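(* For all graphs $G_1,G_2$ (for which the sums below are defined): (i) $f_\infty(G_1+_vG_2)=\max\{f_\infty(G_1),f_\infty(G_2)\}$; (ii) $f_\infty(G_1+_{vw}G_2)\le f_\infty(G_1\oplus_{vw}G_2)\le f_\infty(G_1)+f_\infty(G_2)-1$; (iii) if $G$ is a $k$-sum of $G_1$ and $G_2$ (for any $k$), then $f_\infty(G)\le f_\infty(G_1)+f_\infty(G_2)$.
   Context: A distance function on a graph $G$ is $d:E(G)\to\mathbb{R}_{\ge0}$ with $d(vw)\le\sum_i d(v_{i-1}v_i)$ for every edge $vw$ and every $v$–$w$ path. $f_\infty(G)$ is the least $k$ such that for every distance function $d$ on $G$ there is $\phi:V(G)\to\mathbb{R}^k$ with $\|\phi(v)-\phi(w)\|_\infty=d(vw)$ for all edges $vw$. A $k$-sum of $G_1$ and $G_2$ is a graph obtained by gluing $G_1$ and $G_2$ along a common clique of size $k$ (identifying the clique vertices, $G_1$ and $G_2$ otherwise disjoint) and then possibly deleting some edges of that clique. $G_1+_vG_2$ denotes $G_1\cup G_2$ where $V(G_1)\cap V(G_2)=\{v\}$. $G_1\oplus_{vw}G_2$ denotes $G_1\cup G_2$ where $V(G_1)\cap V(G_2)=\{v,w\}$ and $vw\in E(G_1)\cap E(G_2)$; $G_1+_{vw}G_2$ is $G_1\oplus_{vw}G_2$ with the edge $vw$ deleted. *)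

From Stdlib Require Import Reals ClassicalEpsilon.
From mathcomp Require Import all_boot.

Set Implicit Arguments.
Unset Strict Implicit.
Unset Printing Implicit Defensive.

Definition graph (T : finType) := ({set T} * rel T)%type.

Definition gV (T : finType) (G : graph T) : {set T} := G.1.
Definition gE (T : finType) (G : graph T) : rel T := G.2.

Definition is_graph (T : finType) (G : graph T) : Prop :=
  symmetric (gE G) /\ irreflexive (gE G) /\
  (forall x y, gE G x y -> x \in gV G /\ y \in gV G).

(* length of the walk x = v0, v1, ..., vn (p = [:: v1; ...; vn]) under d *)
Definition plen (T : finType) (d : T -> T -> R) (x : T) (p : seq T) : R :=
  foldr Rplus R0 (pairmap d x p).

(* d : E(G) -> R_{>=0} (edges unordered, hence symmetric on edges), with
   d(vw) <= sum of d along every v-w path of G. *)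
Definition distance_function (T : finType) (G : graph T) (d : T -> T -> R) : Prop :=
  forall x y, gE G x y ->
    Rle R0 (d x y) /\ d x y = d y x /\
    (forall p : seq T, path (gE G) x p -> last x p = y -> uniq (x :: p) ->
       Rle (d x y) (plen d x p)).

Definition linf_dist (k : nat) (a b : 'I_k -> R) : R :=
  foldr Rmax R0 [seq Rabs (Rminus (a i) (b i)) | i <- enum 'I_k].

Definition realizable_in (T : finType) (G : graph T) (k : nat) : Prop :=
  forall d, distance_function G d ->
    exists phi : T -> ('I_k -> R),
      forall x y, gE G x y -> linf_dist (phi x) (phi y) = d x y.

Definition pbool (P : Prop) : bool :=
  if excluded_middle_informative P then true else false.

(* f_infty(G): the least k such that G is realizable in (R^k, l_infty).
   (Such a k always exists for finite graphs; the fallback 0 is never used.) *)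
Definition f_inf (T : finType) (G : graph T) : nat :=
  match excluded_middle_informative (exists k, pbool (realizable_in G k)) with
  | left H => ex_minn H
  | right _ => 0
  end.

Definition gunion (T : finType) (G1 G2 : graph T) : graph T :=
  (gV G1 :|: gV G2, (fun x y => gE G1 x y || gE G2 x y)).

(* G1 +_v G2 : union, with V(G1) /\ V(G2) = {v} *)
Definition one_sum_ok (T : finType) (G1 G2 : graph T) (v : T) : Prop :=
  gV G1 :&: gV G2 = [set v].

(* G1 (+)_{vw} G2 : union, with V(G1) /\ V(G2) = {v,w}, vw an edge of both *)
Definition two_sum_ok (T : finType) (G1 G2 : graph T) (v w : T) : Prop :=
  gV G1 :&: gV G2 = [set v; w] /\ gE G1 v w /\ gE G2 v w.

(* G1 +_{vw} G2 : G1 (+)_{vw} G2 with the edge vw deleted *)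
Definition del_edge (T : finType) (G : graph T) (v w : T) : graph T :=
  (gV G, (fun x y => gE G x y && ~~ (((x == v) && (y == w)) || ((x == w) && (y == v))))).

Definition is_clique (T : finType) (G : graph T) (C : {set T}) : Prop :=
  C \subset gV G /\ forall x y, x \in C -> y \in C -> x != y -> gE G x y.

(* G is a k-sum of G1 and G2: glue along a common k-clique C (the only common
   vertices), then possibly delete some edges of that clique. *)
Definition is_k_sum (T : finType) (k : nat) (G1 G2 G : graph T) : Prop :=
  exists C : {set T},
    gV G1 :&: gV G2 = C /\ #|C| = k /\ is_clique G1 C /\ is_clique G2 C /\
    gV G = gV G1 :|: gV G2 /\
    (forall x y, gE G x y -> gE (gunion G1 G2) x y) /\
    (forall x y, gE (gunion G1 G2) x y -> ~~ ((x \in C) && (y \in C)) ->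
       gE G x y).

From Stdlib Require Import Reals Lra ClassicalEpsilon.
From mathcomp Require Import all_boot.

Set Implicit Arguments.
Unset Strict Implicit.
Unset Printing Implicit Defensive.

(* A pseudometric on the vertex
      set, restricted to the edges, is a distance function; conversely every
      distance function d agrees on the edges with the (symmetrized)
      shortest-walk pseudometric of d.  Hence f_inf G is the least k such that
      for every pseudometric r there is a map into (R^k, l_inf) that is
      isometric along the edges of G; the Frechet embedding
      x |-> (r x t)_t shows that k = |T| always works, so the least k exists.
   2. Such realizations are monotone under taking subgraphs and adding
      coordinates, and two realizations can be concatenated coordinatewise,
      the l_inf distance of the concatenation being the max of the two.
   3. The three gluing constructions:
      - 1-sum: translate both realizations so that v goes to the origin;
      - 2-sum: normalize both realizations so that v goes to 0 and the edge
        vw is realized by one coordinate, merge these two coordinates and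
        fill the remaining coordinates of each side by clamped linear
        interpolation along the merged coordinate;
      - k-sum: extend each coordinate of each realization from the common
        clique to the other side by the 1-Lipschitz McShane extension, and
        concatenate. *)

Local Open Scope R_scope.

Lemma foldr_Rmax_ge (A : eqType) (f : A -> R) (s : seq A) x :
  x \in s -> f x <= foldr Rmax 0 (map f s).
Proof.
elim: s => [|y s IH] //=; rewrite in_cons => /orP [/eqP ->|Hx].
- exact: Rmax_l.
- exact: Rle_trans (IH Hx) (Rmax_r _ _).
Qed.

Lemma foldr_Rmax_le (A : eqType) (f : A -> R) (s : seq A) r :
  (forall x, x \in s -> f x <= r) -> 0 <= r -> foldr Rmax 0 (map f s) <= r.
Proof.
elim: s => [|y s IH] Hs Hr //=.
apply: Rmax_lub; first by apply: Hs; rewrite mem_head.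
by apply: IH => // x Hx; apply: Hs; rewrite in_cons Hx orbT.
Qed.

Lemma foldr_Rmax_ge0 (A : eqType) (f : A -> R) (s : seq A) :
  0 <= foldr Rmax 0 (map f s).
Proof. elim: s => [|y s IH] /=; [lra | exact: Rle_trans IH (Rmax_r _ _)]. Qed.

Lemma foldr_Rmax_attained (A : eqType) (f : A -> R) (s : seq A) :
  foldr Rmax 0 (map f s) = 0 \/ exists2 x, x \in s & f x = foldr Rmax 0 (map f s).
Proof.
elim: s => [|y s IH] /=; first by left.
case: (Rle_dec (f y) (foldr Rmax 0 (map f s))) => Hy.
- rewrite Rmax_right //; case: IH => [->|[x Hx Hfx]]; [by left | right].
  by exists x => //; rewrite in_cons Hx orbT.
- by rewrite Rmax_left; [right; exists y; rewrite ?mem_head | lra].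
Qed.

Lemma linf_ge k (a b : 'I_k -> R) i : Rabs (a i - b i) <= linf_dist a b.
Proof. exact: (foldr_Rmax_ge (fun i => Rabs (a i - b i)) (mem_enum _ i)). Qed.

Lemma linf_ge0 k (a b : 'I_k -> R) : 0 <= linf_dist a b.
Proof. exact: (foldr_Rmax_ge0 (fun i => Rabs (a i - b i))). Qed.

Lemma linf_le k (a b : 'I_k -> R) r :
  (forall i, Rabs (a i - b i) <= r) -> 0 <= r -> linf_dist a b <= r.
Proof. by move=> Hab; apply: (@foldr_Rmax_le _ (fun i => Rabs (a i - b i))) => i _. Qed.

Lemma linf_attained k (a b : 'I_k -> R) :
  linf_dist a b = 0 \/ exists i, Rabs (a i - b i) = linf_dist a b.
Proof.
case: (foldr_Rmax_attained (fun i => Rabs (a i - b i)) (enum 'I_k)) => [|[i _]];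
  [left | right; exists i]; done.
Qed.

Lemma linf_eq k (a b : 'I_k -> R) r :
  (forall i, Rabs (a i - b i) <= r) -> 0 <= r ->
  (r = 0 \/ exists i, r <= Rabs (a i - b i)) -> linf_dist a b = r.
Proof.
move=> Hab Hr Hreach; apply: Rle_antisym; first exact: linf_le.
case: Hreach => [->|[i Hi]]; first exact: linf_ge0.
exact: Rle_trans Hi (linf_ge _ _ _).
Qed.

Lemma linf_ext k (a b a' b' : 'I_k -> R) :
  (forall i, Rabs (a i - b i) = Rabs (a' i - b' i)) ->
  linf_dist a b = linf_dist a' b'.
Proof. by move=> Hab; rewrite /linf_dist; congr foldr; apply: eq_map. Qed.

Definition catv a b (u : 'I_a -> R) (w : 'I_b -> R) : 'I_(a + b) -> R :=
  fun k => match split k with inl l => u l | inr m => w m end.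

Lemma linf_cat a b (u u' : 'I_a -> R) (w w' : 'I_b -> R) :
  linf_dist (catv u w) (catv u' w') = Rmax (linf_dist u u') (linf_dist w w').
Proof.
apply: linf_eq.
- move=> k; rewrite /catv; case: split => l.
  + exact: Rle_trans (linf_ge _ _ _) (Rmax_l _ _).
  + exact: Rle_trans (linf_ge _ _ _) (Rmax_r _ _).
- exact: Rle_trans (linf_ge0 _ _) (Rmax_l _ _).
- case: (Rle_dec (linf_dist u u') (linf_dist w w')) => Huw.
  + rewrite Rmax_right //; case: (linf_attained w w') => [->|[i Hi]]; [by left | right].
    by exists (unsplit (inr i)); rewrite /catv unsplitK Hi; apply: Rle_refl.
  + rewrite Rmax_left; last lra.
    case: (linf_attained u u') => [->|[i Hi]]; [by left | right].
    by exists (unsplit (inl i)); rewrite /catv unsplitK Hi; apply: Rle_refl.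
Qed.

Definition pmetric (T : finType) (r : T -> T -> R) : Prop :=
  (forall x, r x x = 0) /\ (forall x y, r x y = r y x) /\
  (forall x y z, r x z <= r x y + r y z).

Lemma pmetric_ge0 (T : finType) (r : T -> T -> R) x y : pmetric r -> 0 <= r x y.
Proof. by move=> [r0 [rC rT]]; have := rT x y x; rewrite r0 (rC y x); lra. Qed.

Lemma plen_cons (T : finType) (d : T -> T -> R) x y p :
  plen d x (y :: p) = d x y + plen d y p.
Proof. by []. Qed.

Lemma plen_cat (T : finType) (d : T -> T -> R) x p1 p2 :
  plen d x (p1 ++ p2) = plen d x p1 + plen d (last x p1) p2.
Proof.
elim: p1 x => [|y p IH] x /=; first by rewrite /plen /=; lra.
by rewrite !plen_cons IH; lra.
Qed.

Lemma plen_ge0 (T : finType) (e : rel T) (d : T -> T -> R) x p :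
  (forall a b, e a b -> 0 <= d a b) -> path e x p -> 0 <= plen d x p.
Proof.
move=> d_ge0; elim: p x => [|y p IH] x /=; first by rewrite /plen /=; lra.
by move=> /andP [Hxy Hp]; rewrite plen_cons; have := d_ge0 _ _ Hxy; have := IH _ Hp; lra.
Qed.

Lemma pmetric_plen (T : finType) (r : T -> T -> R) x p :
  pmetric r -> r x (last x p) <= plen r x p.
Proof.
move=> [r0 [_ rT]]; elim: p x => [|y p IH] x /=; first by rewrite /plen /= r0; lra.
by rewrite plen_cons; have := IH y; have := rT x y (last y p); lra.
Qed.

Lemma pmetric_distance (T : finType) (G : graph T) (r : T -> T -> R) :
  pmetric r -> distance_function G r.
Proof.
move=> Hr x y _; split; first exact: pmetric_ge0.
split; first exact: (proj1 (proj2 Hr)).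
by move=> p _ Hlast _; rewrite -{1}Hlast; apply: pmetric_plen.
Qed.

Lemma shorten_walk (T : finType) (e : rel T) (d : T -> T -> R) x p :
  (forall a b, e a b -> 0 <= d a b) -> path e x p ->
  exists p', [/\ path e x p', last x p' = last x p, uniq (x :: p') &
                 plen d x p' <= plen d x p].
Proof.
move=> d_ge0; elim: p x => [|y q IH] x /=; first by exists [::]; split => //; lra.
move=> /andP [Hxy Hq]; have [q' [Hq' Hlast Huniq Hle]] := IH y Hq.
have Hyq' : path e x (y :: q') by rewrite /= Hxy Hq'.
have Hlast' : last x (y :: q') = last y q by [].
have Hle' : plen d x (y :: q') <= d x y + plen d y q by rewrite plen_cons; lra.
case: (boolP (x \in y :: q')) => Hx.
- move: Hyq' Hlast' Huniq Hle'; case/splitPr: Hx => s1 s2.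
  rewrite cat_path /= cat_uniq last_cat plen_cat plen_cons /=.
  move=> /andP [Hs1 /andP [Hlx Hs2]] Hlast2 /and3P [_ _ Hu2] Hle2.
  exists s2; split => //; rewrite plen_cons.
  by have := plen_ge0 d_ge0 Hs1; have := d_ge0 _ _ Hlx; lra.
- exists (y :: q'); split => //=; by rewrite Hx.
Qed.

Lemma glb_nonneg (S : R -> Prop) b : S b -> (forall s, S s -> 0 <= s) ->
  {g | (forall s, S s -> g <= s) /\ (forall m, (forall s, S s -> m <= s) -> m <= g)}.
Proof.
move=> Sb S_ge0.
have Hbound : bound (fun s => S (- s)) by exists 0 => s /S_ge0; lra.
have Hne : exists s, S (- s) by exists (- b); rewrite Ropp_involutive.
have [l [l_ub l_least]] := completeness _ Hbound Hne.
exists (- l); split.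
- move=> s Ss; have /l_ub : S (- - s) by rewrite Ropp_involutive.
  lra.
- move=> m Hm; suff : l <= - m by lra.
  by apply: l_least => s /Hm; lra.
Qed.

(* The shortest-walk quasi-metric of a distance function d on G.  Walks are
   capped by an upper bound of d, so that the infimum is over a nonempty set
   even between vertices in different components. *)
Section ShortestWalkMetric.
Variables (T : finType) (G : graph T) (d : T -> T -> R).
Hypothesis d_dist : distance_function G d.

Definition walk_cap : R := foldr Rmax 0 [seq d p.1 p.2 | p <- enum {: T * T}].

Definition walk_value (x y : T) (s : R) : Prop :=
  s = walk_cap \/ exists p, [/\ path (gE G) x p, last x p = y & s = plen d x p].

Lemma dist_edge_ge0 a b : gE G a b -> 0 <= d a b.
Proof. by move=> /d_dist []. Qed.

Lemma walk_cap_ge a b : d a b <= walk_cap.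
Proof. exact: (@foldr_Rmax_ge _ (fun p => d p.1 p.2) _ (a, b) (mem_enum _ _)). Qed.

Lemma walk_value_ge0 x y s : walk_value x y s -> 0 <= s.
Proof.
case=> [->|[p [Hp _ ->]]]; first exact: foldr_Rmax_ge0.
exact: plen_ge0 dist_edge_ge0 Hp.
Qed.

Definition walk_dist (x y : T) : R :=
  sval (glb_nonneg (or_introl erefl : walk_value x y walk_cap) (@walk_value_ge0 x y)).

Lemma walk_dist_le x y s : walk_value x y s -> walk_dist x y <= s.
Proof. exact: (proj1 (svalP (glb_nonneg _ _))). Qed.

Lemma walk_dist_ge x y m :
  (forall s, walk_value x y s -> m <= s) -> m <= walk_dist x y.
Proof. exact: (proj2 (svalP (glb_nonneg _ _))). Qed.

Lemma walk_dist_refl x : walk_dist x x = 0.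
Proof.
apply: Rle_antisym; last by apply: walk_dist_ge => s /walk_value_ge0.
by apply: walk_dist_le; right; exists [::].
Qed.

Lemma walk_value_cat x y z s1 s2 :
  walk_value x y s1 -> walk_value y z s2 -> walk_dist x z <= s1 + s2.
Proof.
move=> Hs1 Hs2; have := walk_value_ge0 Hs1; have := walk_value_ge0 Hs2.
have Hcap : walk_dist x z <= walk_cap by apply: walk_dist_le; left.
case: Hs1 => [->|[p1 [Hp1 Hl1 ->]]]; first lra.
case: Hs2 => [->|[p2 [Hp2 Hl2 ->]]]; first lra.
move=> _ _; rewrite -Hl1 -plen_cat; apply: walk_dist_le; right.
by exists (p1 ++ p2); rewrite cat_path last_cat Hl1 Hp1 Hp2.
Qed.

Lemma walk_dist_triangle x y z : walk_dist x z <= walk_dist x y + walk_dist y z.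
Proof.
suff : walk_dist x z - walk_dist y z <= walk_dist x y by lra.
apply: walk_dist_ge => s1 Hs1.
suff : walk_dist x z - s1 <= walk_dist y z by lra.
apply: walk_dist_ge => s2 Hs2; have := walk_value_cat Hs1 Hs2; lra.
Qed.

(* On an edge the infimum is d itself: the edge is a walk, and every walk is
   at least as long as a path, which is at least d by assumption. *)
Lemma walk_dist_edge x y : gE G x y -> walk_dist x y = d x y.
Proof.
move=> Hxy; apply: Rle_antisym.
- have -> : d x y = plen d x [:: y] by rewrite plen_cons /plen /=; lra.
  by apply: walk_dist_le; right; exists [:: y]; rewrite /= Hxy.
- apply: walk_dist_ge => s [->|[p [Hp Hlast ->]]]; first exact: walk_cap_ge.
  have [p' [Hp' Hlast' Huniq Hle]] := shorten_walk dist_edge_ge0 Hp.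
  have [_ [_ d_short]] := d_dist Hxy.
  by have := d_short p' Hp' (etrans Hlast' Hlast) Huniq; lra.
Qed.

End ShortestWalkMetric.

(* Every distance function of a graph agrees on the edges with a
   pseudometric: the symmetrized shortest-walk metric. *)
Lemma distance_pmetric (T : finType) (G : graph T) (d : T -> T -> R) :
  symmetric (gE G) -> distance_function G d ->
  exists r, pmetric r /\ forall x y, gE G x y -> r x y = d x y.
Proof.
move=> G_sym d_dist; pose g := walk_dist d_dist.
exists (fun x y => (g x y + g y x) / 2); split; [split; [|split] |].
- by move=> x; rewrite /g walk_dist_refl; lra.
- by move=> x y; lra.
- by move=> x y z; rewrite /g; have := walk_dist_triangle d_dist x y z;
     have := walk_dist_triangle d_dist z y x; lra.
- move=> x y Hxy; have Hyx : gE G y x by rewrite G_sym.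
  rewrite /g !walk_dist_edge //; have [_ [-> _]] := d_dist _ _ Hxy; lra.
Qed.

Definition pm_realizable (T : finType) (G : graph T) (k : nat) : Prop :=
  forall r, pmetric r -> exists phi : T -> 'I_k -> R,
    forall x y, gE G x y -> linf_dist (phi x) (phi y) = r x y.

Lemma realizable_pm (T : finType) (G : graph T) k :
  symmetric (gE G) -> (realizable_in G k <-> pm_realizable G k).
Proof.
move=> G_sym; split=> [HG r Hr | HG d Hd]; first exact: HG r (pmetric_distance Hr).
have [r [Hr Hrd]] := distance_pmetric G_sym Hd; have [phi Hphi] := HG r Hr.
by exists phi => x y Hxy; rewrite Hphi // Hrd.
Qed.

Lemma frechet_realizable (T : finType) (G : graph T) : pm_realizable G #|T|.
Proof.
move=> r Hr; exists (fun x t => r x (enum_val t)) => x y _.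
have [r0 [rC rT]] := Hr; apply: linf_eq.
- move=> i; apply: Rabs_le; move: (enum_val i) => t.
  by have := rT x y t; have := rT y x t; rewrite (rC y x); split; lra.
- exact: pmetric_ge0.
- right; exists (enum_rank y); rewrite enum_rankK r0 Rminus_0_r; exact: RRle_abs.
Qed.

Lemma pboolP (P : Prop) : reflect P (pbool P).
Proof. by rewrite /pbool; case: excluded_middle_informative => HP; constructor. Qed.

Lemma f_inf_spec (T : finType) (G : graph T) :
  symmetric (gE G) ->
  pm_realizable G (f_inf G) /\ (forall k, pm_realizable G k -> (f_inf G <= k)%N).
Proof.
move=> G_sym; rewrite /f_inf; case: excluded_middle_informative => [Hex | Hnone].
- case: ex_minnP => m /pboolP Hm m_least; split; first exact/realizable_pm.
  by move=> k Hk; apply/m_least/pboolP/realizable_pm.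
- exfalso; apply: Hnone; exists #|T|; apply/pboolP/realizable_pm => //.
  exact: frechet_realizable.
Qed.

Lemma f_inf_realizable (T : finType) (G : graph T) :
  symmetric (gE G) -> pm_realizable G (f_inf G).
Proof. by move=> G_sym; have [] := f_inf_spec G_sym. Qed.

Lemma f_inf_le (T : finType) (G : graph T) k :
  symmetric (gE G) -> pm_realizable G k -> (f_inf G <= k)%N.
Proof. by move=> G_sym; have [_] := f_inf_spec G_sym; apply. Qed.

Lemma pm_realizable_sub (T : finType) (G H : graph T) k :
  (forall x y, gE G x y -> gE H x y) -> pm_realizable H k -> pm_realizable G k.
Proof.
move=> GH HH r Hr; have [phi Hphi] := HH r Hr.
by exists phi => x y /GH; apply: Hphi.
Qed.

Lemma pm_realizable_pad (T : finType) (G : graph T) k m :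
  pm_realizable G k -> (k <= m)%N -> pm_realizable G m.
Proof.
move=> HG km r Hr; have [phi Hphi] := HG r Hr.
pose pad x (i : 'I_m) := if insub (val i) is Some j then phi x j else 0.
exists pad => x y Hxy; rewrite -(Hphi x y Hxy); apply: linf_eq.
- move=> i; rewrite /pad; case: insubP => [j _ _|_]; first exact: linf_ge.
  by rewrite Rminus_0_r Rabs_R0; apply: linf_ge0.
- exact: linf_ge0.
- case: (linf_attained (phi x) (phi y)) => [->|[j Hj]]; [by left | right].
  by exists (widen_ord km j); rewrite /pad /= valK -Hj; apply: Rle_refl.
Qed.

(* A graph with an edge between distinct vertices is not realizable in
   dimension 0 (take the discrete metric). *)
Lemma pm_realizable0 (T : finType) (G : graph T) x y :
  gE G x y -> x != y -> ~ pm_realizable G 0.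
Proof.
move=> Hxy xy HG.
have Hdiscrete : pmetric (fun a b : T => if a == b then 0 else 1).
  split; [|split] => [a | a b | a b c]; first by rewrite eqxx.
  - by rewrite eq_sym.
  - case: (eqVneq a b) => [<-|_]; first by case: (a == c); lra.
    by case: (a == c); case: (b == c); lra.
have [phi Hphi] := HG _ Hdiscrete.
move: (Hphi x y Hxy); rewrite (negbTE xy) /linf_dist.
have -> : enum 'I_0 = [::] by apply: size0nil; rewrite size_enum_ord.
by rewrite /=; lra.
Qed.

Lemma gunion_edge (T : finType) (G1 G2 : graph T) x y :
  gE (gunion G1 G2) x y = gE G1 x y || gE G2 x y.
Proof. by []. Qed.

Lemma gunion_sym (T : finType) (G1 G2 : graph T) :
  is_graph G1 -> is_graph G2 -> symmetric (gE (gunion G1 G2)).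
Proof. by move=> [sym1 _] [sym2 _] x y; rewrite !gunion_edge sym1 sym2. Qed.

Lemma del_edge_sym (T : finType) (G : graph T) v w :
  symmetric (gE G) -> symmetric (gE (del_edge G v w)).
Proof.
move=> G_sym x y; rewrite /del_edge /gE /= -!/(gE G) G_sym.
by rewrite [(y == v) && _]andbC [(y == w) && _]andbC orbC.
Qed.

(* 1-sums: translate the realizations of both sides so that the cut vertex
   is sent to the origin; then they agree on the only common vertex. *)
Lemma one_sum_realizable (T : finType) (G1 G2 : graph T) v k :
  is_graph G1 -> is_graph G2 -> one_sum_ok G1 G2 v ->
  pm_realizable G1 k -> pm_realizable G2 k -> pm_realizable (gunion G1 G2) k.
Proof.
move=> [_ [_ V1]] [_ [_ V2]] cut R1 R2 r Hr.
have [phi1 H1] := R1 r Hr; have [phi2 H2] := R2 r Hr.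
pose psi x i := if x \in gV G1 then phi1 x i - phi1 v i else phi2 x i - phi2 v i.
have psi2 x i : x \in gV G2 -> psi x i = phi2 x i - phi2 v i.
  rewrite /psi; case: ifP => // x1 x2.
  have : x \in gV G1 :&: gV G2 by rewrite inE x1 x2.
  by rewrite cut inE => /eqP ->; lra.
exists psi => x y /orP [Hxy|Hxy].
- have [x1 y1] := V1 _ _ Hxy; rewrite -H1 //; apply: linf_ext => i.
  by rewrite /psi x1 y1; f_equal; ring.
- have [x2 y2] := V2 _ _ Hxy; rewrite -H2 //; apply: linf_ext => i.
  by rewrite !psi2 //; f_equal; ring.
Qed.

(* A realization of G can be normalized (by translation and a sign change)
   so that v is sent to the origin, the edge vw is realized by a coordinate
   i on which w has value r v w, and all coordinates of w are bounded by
   r v w in absolute value. *)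
Lemma normalize_realization (T : finType) (G : graph T) n r
    (phi : T -> 'I_n.+1 -> R) v w :
  pmetric r -> symmetric (gE G) -> gE G v w ->
  (forall x y, gE G x y -> linf_dist (phi x) (phi y) = r x y) ->
  exists psi : T -> 'I_n.+1 -> R, exists i,
    [/\ forall x y, gE G x y -> linf_dist (psi x) (psi y) = r x y,
        forall l, psi v l = 0, psi w i = r v w &
        forall l, Rabs (psi w l) <= r v w].
Proof.
move=> Hr G_sym Hvw Hphi.
have [i Hi] : exists i, Rabs (phi v i - phi w i) = r v w.
  case: (linf_attained (phi v) (phi w)) => [H0|[i Hi]]; last by exists i; rewrite Hi Hphi.
  exists ord0; apply: Rle_antisym; rewrite -Hphi //; first exact: linf_ge.
  by rewrite H0; apply: Rabs_pos.
pose s := if Rle_dec 0 (phi w i - phi v i) then 1 else -1.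
have Hs : Rabs s = 1 by rewrite /s; destruct Rle_dec; rewrite ?Rabs_Ropp Rabs_R1.
exists (fun x l => s * (phi x l - phi v l)), i; split.
- move=> x y Hxy; rewrite -Hphi //; apply: linf_ext => l.
  rewrite -Rmult_minus_distr_l Rabs_mult Hs Rmult_1_l; f_equal; ring.
- by move=> l; ring.
- rewrite -Hi /s Rabs_minus_sym; destruct Rle_dec as [H|H].
  + by rewrite Rabs_right /=; lra.
  + by rewrite Rabs_left /=; lra.
- move=> l; rewrite Rabs_mult Hs Rmult_1_l (proj1 (proj2 Hr) v w) -Hphi.
  + exact: linf_ge.
  + by rewrite G_sym.
Qed.

Definition clamp (D t : R) : R := Rmax 0 (Rmin t D).
Definition interp (D t z : R) : R := clamp D t / D * z.

Lemma clamp_lip D t t' : Rabs (clamp D t - clamp D t') <= Rabs (t - t').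
Proof.
rewrite /clamp; unfold Rmax, Rmin; repeat destruct Rle_dec;
  unfold Rabs; repeat destruct Rcase_abs; lra.
Qed.

Lemma Rabs_bounded_by0 D z : Rabs z <= D -> D = 0 -> z = 0.
Proof. by move=> Hz D0; move: Hz; rewrite D0 /Rabs; case: Rcase_abs; lra. Qed.

Lemma interp_lip D t t' z : Rabs z <= D ->
  Rabs (interp D t z - interp D t' z) <= Rabs (t - t').
Proof.
move=> Hz; rewrite /interp; have D_ge0 : 0 <= D by have := Rabs_pos z; lra.
case: (Req_dec D 0) => D0.
  by rewrite (Rabs_bounded_by0 Hz D0) !Rmult_0_r Rminus_0_r Rabs_R0; apply: Rabs_pos.
have Hq : Rabs (z / D) <= 1.
  rewrite /Rdiv Rabs_mult Rabs_inv (Rabs_right D); last lra.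
  apply: (Rmult_le_reg_r D); first lra.
  by rewrite Rmult_assoc Rinv_l //; lra.
rewrite (_ : _ - _ = (clamp D t - clamp D t') * (z / D)); last by field.
rewrite Rabs_mult; apply: Rle_trans (clamp_lip D t t').
by rewrite -[X in _ <= X]Rmult_1_r; apply: Rmult_le_compat_l; [apply: Rabs_pos|].
Qed.

Lemma interp_at0 D z : 0 <= D -> interp D 0 z = 0.
Proof. by move=> D_ge0; rewrite /interp /clamp Rmin_left // Rmax_left /Rdiv; lra. Qed.

Lemma interp_atD D z : Rabs z <= D -> interp D D z = z.
Proof.
move=> Hz; have D_ge0 : 0 <= D by have := Rabs_pos z; lra.
rewrite /interp /clamp (Rmin_left _ _ (Rle_refl D)) Rmax_right //.
case: (Req_dec D 0) => D0; first by rewrite (Rabs_bounded_by0 Hz D0); ring.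
by field.
Qed.

(* Given normalized realizations p1 of G1 in dimension a+1 and p2
   of G2 in dimension b+1 (coordinates i and j realizing the edge vw), the
   realization of the 2-sum lives in dimension a+1+b: coordinate i of p1 and
   coordinate j of p2 are merged, the other coordinates of each side are
   kept, and the coordinates of the opposite side are filled by
   interpolating along the merged coordinate between the values at v and w. *)
Section TwoSum.
Variables (T : finType) (G1 G2 : graph T) (r : T -> T -> R) (v w : T) (a b : nat).
Variables (p1 : T -> 'I_a.+1 -> R) (p2 : T -> 'I_b.+1 -> R).
Variables (i : 'I_a.+1) (j : 'I_b.+1).
Hypothesis r_pm : pmetric r.
Hypothesis p1_iso : forall x y, gE G1 x y -> linf_dist (p1 x) (p1 y) = r x y.
Hypothesis p2_iso : forall x y, gE G2 x y -> linf_dist (p2 x) (p2 y) = r x y.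
Hypotheses (p1v : forall l, p1 v l = 0) (p2v : forall l, p2 v l = 0).
Hypotheses (p1w : p1 w i = r v w) (p2w : p2 w j = r v w).
Hypothesis p1w_small : forall l, Rabs (p1 w l) <= r v w.
Hypothesis p2w_small : forall l, Rabs (p2 w l) <= r v w.

Definition left_part (x : T) : 'I_(a.+1 + b) -> R :=
  catv (p1 x) (fun m => interp (r v w) (p1 x i) (p2 w (lift j m))).

Definition right_part (x : T) : 'I_(a.+1 + b) -> R :=
  catv (fun l => if l == i then p2 x j else interp (r v w) (p2 x j) (p1 w l))
       (fun m => p2 x (lift j m)).

Lemma rvw_ge0 : 0 <= r v w.
Proof. exact: pmetric_ge0. Qed.

Lemma parts_agree_v k : left_part v k = right_part v k.
Proof.
rewrite /left_part /right_part /catv; case: split => [l|m].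
- by rewrite p1v p2v; case: eqP => _; rewrite ?interp_at0 //; apply: rvw_ge0.
- by rewrite p1v p2v interp_at0 //; apply: rvw_ge0.
Qed.

Lemma parts_agree_w k : left_part w k = right_part w k.
Proof.
rewrite /left_part /right_part /catv; case: split => [l|m].
- by case: eqP => [->|_]; rewrite ?p1w ?p2w ?interp_atD.
- by rewrite p1w interp_atD.
Qed.

(* On G1 the interpolated coordinates move no more than coordinate i. *)
Lemma left_part_iso x y :
  gE G1 x y -> linf_dist (left_part x) (left_part y) = r x y.
Proof.
move=> Hxy; rewrite /left_part linf_cat p1_iso //.
apply: Rmax_left; apply: linf_le => [m|]; last exact: pmetric_ge0.
apply: Rle_trans (interp_lip _ _ (p2w_small _)) _.
by rewrite -(p1_iso Hxy); apply: linf_ge.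
Qed.

(* On G2 every coordinate of p2 is kept (coordinate j as the merged one) and
   the interpolated coordinates move no more than coordinate j. *)
Lemma right_part_iso x y :
  gE G2 x y -> linf_dist (right_part x) (right_part y) = r x y.
Proof.
move=> Hxy; have p2_le m : Rabs (p2 x m - p2 y m) <= r x y.
  by rewrite -(p2_iso Hxy); apply: linf_ge.
apply: linf_eq; last 1 first.
- case: (linf_attained (p2 x) (p2 y)) => [H0|[m Hm]]; first by left; rewrite -(p2_iso Hxy).
  right; rewrite -(p2_iso Hxy) -Hm.
  case: (unliftP j m) => [m' ->|->].
  + by exists (unsplit (inr m')); rewrite /right_part /catv unsplitK; apply: Rle_refl.
  + by exists (unsplit (inl i)); rewrite /right_part /catv unsplitK eqxx; apply: Rle_refl.
- move=> k; rewrite /right_part /catv; case: split => [l|m] //.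
  case: eqP => _ //; exact: Rle_trans (interp_lip _ _ (p1w_small _)) (p2_le j).
- exact: pmetric_ge0.
Qed.

End TwoSum.

Lemma two_sum_realizable (T : finType) (G1 G2 : graph T) v w a b :
  is_graph G1 -> is_graph G2 -> two_sum_ok G1 G2 v w ->
  pm_realizable G1 a.+1 -> pm_realizable G2 b.+1 ->
  pm_realizable (gunion G1 G2) (a.+1 + b).
Proof.
move=> [sym1 [_ V1]] [sym2 [_ V2]] [cut [vw1 vw2]] R1 R2 r Hr.
have [phi1 H1] := R1 r Hr; have [phi2 H2] := R2 r Hr.
have [p1 [i [P1 P1v P1w P1b]]] := normalize_realization Hr sym1 vw1 H1.
have [p2 [j [P2 P2v P2w P2b]]] := normalize_realization Hr sym2 vw2 H2.
pose F x k := if x \in gV G1 then left_part r v w p1 p2 i j x k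
              else right_part r v w p1 p2 i j x k.
have F2 x k : x \in gV G2 -> F x k = right_part r v w p1 p2 i j x k.
  rewrite /F; case: ifP => // x1 x2; have : x \in gV G1 :&: gV G2 by rewrite inE x1 x2.
  rewrite cut !inE => /orP [] /eqP ->; [exact: parts_agree_v | exact: parts_agree_w].
exists F => x y /orP [Hxy|Hxy].
- have [x1 y1] := V1 _ _ Hxy; rewrite -(left_part_iso i j Hr P1 P2b Hxy).
  by apply: linf_ext => k; rewrite /F x1 y1.
- have [x2 y2] := V2 _ _ Hxy; rewrite -(right_part_iso i j Hr P2 P1b Hxy).
  by apply: linf_ext => k; rewrite !F2.
Qed.

Lemma foldr_Rmin_le (A : eqType) (f : A -> R) c0 s c :
  c \in c0 :: s -> foldr Rmin (f c0) (map f s) <= f c.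
Proof.
elim: s => [|y s IH]; first by rewrite mem_seq1 => /eqP ->; apply: Rle_refl.
rewrite /= !in_cons => /or3P [Hc|/eqP ->|Hc].
- by apply: Rle_trans (Rmin_r _ _) (IH _); rewrite in_cons Hc.
- exact: Rmin_l.
- by apply: Rle_trans (Rmin_r _ _) (IH _); rewrite in_cons Hc orbT.
Qed.

Lemma foldr_Rmin_ge (A : eqType) (f : A -> R) c0 s L :
  (forall c, c \in c0 :: s -> L <= f c) -> L <= foldr Rmin (f c0) (map f s).
Proof.
elim: s => [|y s IH] Hs /=; first by apply: Hs; rewrite mem_head.
apply: Rmin_glb; first by apply: Hs; rewrite !in_cons eqxx orbT.
by apply: IH => c; rewrite in_cons => /orP [/eqP ->|Hc]; apply: Hs;
  rewrite !in_cons ?eqxx ?Hc ?orbT.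
Qed.

Lemma foldr_Rmin_shift (A : Type) (f f' : A -> R) c0 s e :
  (forall c, f c <= f' c + e) ->
  foldr Rmin (f c0) (map f s) <= foldr Rmin (f' c0) (map f' s) + e.
Proof.
move=> Hff'; elim: s => [|y s IH] /=; first exact: Hff'.
move: (foldr _ _ _) (foldr _ _ _) IH (Hff' y) => m m'.
by unfold Rmin; do 2 destruct Rle_dec; lra.
Qed.

Definition mcshane (T : finType) (r : T -> T -> R) (g : T -> R) (cs : seq T) (x : T) : R :=
  if cs is c0 :: s then foldr Rmin (g c0 + r x c0) [seq g c + r x c | c <- s] else 0.

Lemma mcshane_lip (T : finType) (r : T -> T -> R) g cs x y :
  pmetric r -> mcshane r g cs x <= mcshane r g cs y + r x y.
Proof.
move=> Hr; case: cs => [|c0 s] /=; first by have := pmetric_ge0 x y Hr; lra.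
apply: (@foldr_Rmin_shift _ (fun c => g c + r x c) (fun c => g c + r y c)) => c.
by have := proj2 (proj2 Hr) x y c; lra.
Qed.

Lemma mcshane_near (T : finType) (r : T -> T -> R) g cs x c :
  pmetric r -> (forall c c', c \in cs -> c' \in cs -> g c - g c' <= r c c') ->
  c \in cs -> Rabs (mcshane r g cs x - g c) <= r x c.
Proof.
move=> [r0 [rC rT]]; case: cs => [|c0 s] // g_lip Hc; apply: Rabs_le; split.
- suff : g c - r x c <= mcshane r g (c0 :: s) x by lra.
  apply: (@foldr_Rmin_ge _ (fun c => g c + r x c)) => c' Hc'.
  by have := g_lip _ _ Hc Hc'; have := rT c x c'; rewrite (rC c x); lra.
- by have := foldr_Rmin_le (fun c => g c + r x c) Hc; rewrite /=; lra.
Qed.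

Definition extend_realization (T : finType) k (r : T -> T -> R) (V C : {set T})
    (phi : T -> 'I_k -> R) (x : T) (l : 'I_k) : R :=
  if x \in V then phi x l else mcshane r (fun c => phi c l) (enum C) x.

Lemma extend_realization_lip (T : finType) k r (V C : {set T}) (phi : T -> 'I_k -> R) x y l :
  pmetric r ->
  (forall c c', c \in C -> c' \in C -> c != c' -> linf_dist (phi c) (phi c') = r c c') ->
  (x \in V -> x \in C) -> (y \in V -> y \in C) -> x != y ->
  Rabs (extend_realization r V C phi x l - extend_realization r V C phi y l) <= r x y.
Proof.
move=> Hr phi_C xC yC xy; have rC := proj1 (proj2 Hr).
have g_lip c c' : c \in enum C -> c' \in enum C -> phi c l - phi c' l <= r c c'.
  rewrite !mem_enum => Hc Hc'; case: (eqVneq c c') => [->|cc'].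
    by rewrite (proj1 Hr); lra.
  rewrite -phi_C //; have := linf_ge (phi c) (phi c') l.
  by have := Rle_abs (phi c l - phi c' l); lra.
rewrite /extend_realization; case: ifP => xV; case: ifP => yV.
- by rewrite -phi_C ?xC ?yC //; apply: linf_ge.
- by rewrite Rabs_minus_sym (rC x y); apply: mcshane_near; rewrite ?mem_enum ?xC.
- by apply: mcshane_near; rewrite ?mem_enum ?yC.
- apply: Rabs_le; have := mcshane_lip (fun c => phi c l) (enum C) x y Hr.
  by have := mcshane_lip (fun c => phi c l) (enum C) y x Hr; rewrite (rC y x); split; lra.
Qed.

(* On an edge of G1, the extension of the realization of G1 is the
   realization itself, while every coordinate of the extension of the
   realization of G2 is 1-Lipschitz (an endpoint lying in V(G2) lies in the
   clique C = V(G1) /\ V(G2)); so the concatenation realizes the edge. *)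
Lemma k_sum_edge (T : finType) a b r (G1 G2 : graph T) (C : {set T})
    (phi1 : T -> 'I_a -> R) (phi2 : T -> 'I_b -> R) x y :
  pmetric r -> is_graph G1 -> gV G1 :&: gV G2 = C -> is_clique G2 C ->
  (forall x y, gE G1 x y -> linf_dist (phi1 x) (phi1 y) = r x y) ->
  (forall x y, gE G2 x y -> linf_dist (phi2 x) (phi2 y) = r x y) ->
  gE G1 x y ->
  Rmax (linf_dist (extend_realization r (gV G1) C phi1 x)
                  (extend_realization r (gV G1) C phi1 y))
       (linf_dist (extend_realization r (gV G2) C phi2 x)
                  (extend_realization r (gV G2) C phi2 y)) = r x y.
Proof.
move=> Hr [_ [irr1 V1]] cut [_ cl2] H1 H2 Hxy; have [x1 y1] := V1 _ _ Hxy.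
have -> : linf_dist (extend_realization r (gV G1) C phi1 x)
                    (extend_realization r (gV G1) C phi1 y) = r x y.
  by rewrite -H1 //; apply: linf_ext => l; rewrite /extend_realization x1 y1.
apply: Rmax_left; apply: linf_le => [l|]; last exact: pmetric_ge0.
apply: extend_realization_lip => //.
- by move=> c c' Hc Hc' cc'; apply: H2; apply: cl2.
- by rewrite -cut inE x1.
- by rewrite -cut inE y1.
- by apply/eqP => xy; move: Hxy; rewrite xy irr1.
Qed.

Lemma k_sum_realizable (T : finType) k a b (G1 G2 G : graph T) :
  is_graph G1 -> is_graph G2 -> is_k_sum k G1 G2 G ->
  pm_realizable G1 a -> pm_realizable G2 b -> pm_realizable G (a + b).
Proof.
move=> HG1 HG2 [C [cut [_ [cl1 [cl2 [_ [G_sub _]]]]]]] R1 R2 r Hr.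
have [phi1 H1] := R1 r Hr; have [phi2 H2] := R2 r Hr.
exists (fun x => catv (extend_realization r (gV G1) C phi1 x)
                      (extend_realization r (gV G2) C phi2 x)) => x y Hxy.
rewrite linf_cat; case/orP: (G_sub _ _ Hxy) => Hxy'.
- exact: k_sum_edge Hr HG1 cut cl2 H1 H2 Hxy'.
- by rewrite Rmax_comm; apply: k_sum_edge Hr HG2 _ cl1 H2 H1 Hxy'; rewrite setIC.
Qed.

Local Close Scope R_scope.

Lemma f_inf_subgraph (T : finType) (G H : graph T) :
  symmetric (gE G) -> symmetric (gE H) ->
  (forall x y, gE G x y -> gE H x y) -> f_inf G <= f_inf H.
Proof.
move=> G_sym H_sym GH; apply: f_inf_le G_sym _.
exact: pm_realizable_sub GH (f_inf_realizable H_sym).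
Qed.

Lemma f_inf_one_sum (T : finType) (G1 G2 : graph T) v :
  is_graph G1 -> is_graph G2 -> one_sum_ok G1 G2 v ->
  f_inf (gunion G1 G2) = maxn (f_inf G1) (f_inf G2).
Proof.
move=> HG1 HG2 cut; have U_sym := gunion_sym HG1 HG2.
have [sym1 _] := HG1; have [sym2 _] := HG2.
apply/eqP; rewrite eqn_leq geq_max; apply/and3P; split.
- apply: f_inf_le U_sym (one_sum_realizable HG1 HG2 cut _ _).
  + exact: pm_realizable_pad (f_inf_realizable sym1) (leq_maxl _ _).
  + exact: pm_realizable_pad (f_inf_realizable sym2) (leq_maxr _ _).
- by apply: f_inf_subgraph => // x y E; rewrite gunion_edge E.
- by apply: f_inf_subgraph => // x y E; rewrite gunion_edge E orbT.
Qed.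

Lemma f_inf_two_sum (T : finType) (G1 G2 : graph T) v w :
  is_graph G1 -> is_graph G2 -> two_sum_ok G1 G2 v w ->
  f_inf (gunion G1 G2) <= f_inf G1 + f_inf G2 - 1.
Proof.
move=> HG1 HG2 cut; have [sym1 [irr1 _]] := HG1; have [sym2 _] := HG2.
have [_ [vw1 vw2]] := cut.
have vw : v != w by apply/eqP => vw; move: vw1; rewrite vw irr1.
move: (f_inf_realizable sym1) (f_inf_realizable sym2).
case: (f_inf G1) => [|a] R1; first by case: (pm_realizable0 vw1 vw R1).
case: (f_inf G2) => [|b] R2; first by case: (pm_realizable0 vw2 vw R2).
rewrite addnS subn1 /=; apply: f_inf_le (gunion_sym HG1 HG2) _.
exact: two_sum_realizable HG1 HG2 cut R1 R2.
Qed.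

Lemma f_inf_k_sum (T : finType) k (G1 G2 G : graph T) :
  is_graph G1 -> is_graph G2 -> is_graph G -> is_k_sum k G1 G2 G ->
  f_inf G <= f_inf G1 + f_inf G2.
Proof.
move=> HG1 HG2 [G_sym _] Hk; apply: f_inf_le G_sym _.
exact: k_sum_realizable HG1 HG2 Hk (f_inf_realizable (proj1 HG1))
                                   (f_inf_realizable (proj1 HG2)).
Qed.

Theorem mainTheorem10 :
  (forall (T : finType) (G1 G2 : graph T) (v : T),
     is_graph G1 -> is_graph G2 -> one_sum_ok G1 G2 v ->
     f_inf (gunion G1 G2) = maxn (f_inf G1) (f_inf G2)) /\
  (forall (T : finType) (G1 G2 : graph T) (v w : T),
     is_graph G1 -> is_graph G2 -> two_sum_ok G1 G2 v w ->
     f_inf (del_edge (gunion G1 G2) v w) <= f_inf (gunion G1 G2) /\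
     f_inf (gunion G1 G2) <= f_inf G1 + f_inf G2 - 1) /\
  (forall (T : finType) (k : nat) (G1 G2 G : graph T),
     is_graph G1 -> is_graph G2 -> is_graph G -> is_k_sum k G1 G2 G ->
     f_inf G <= f_inf G1 + f_inf G2).
Proof.
split; [exact: f_inf_one_sum | split; last exact: f_inf_k_sum].
move=> T G1 G2 v w HG1 HG2 cut; split; last exact: f_inf_two_sum HG1 HG2 cut.
have U_sym := gunion_sym HG1 HG2.
by apply: f_inf_subgraph (del_edge_sym v w U_sym) U_sym _ => x y /andP [].
Qed.
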